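(* Let $A:[1,\infty)\to\mathbb R^{d\times d}$ be continuous with evolution family $T(t,s)$ for $x'=A(t)x$, and let $\mathcal S=\{\|\cdot\|_t;\ t\ge1\}$ be a family of norms on $\mathbb R^d$. Assume there exist $K,a>0$ with $\|T(t,s)x\|_t\le K(t/s)^a\|x\|_s$ and $\|T(s,t)x\|_s\le K(t/s)^a\|x\|_t$ for all $t\ge s\ge1$ and $x\in\mathbb R^d$. Then the following are equivalent: (a) $x'=A(t)x$ admits a strong polynomial dichotomy with respect to $\mathcal S$; (b) the sequence $(A_n)_{n\in\mathbb N}$, $A_n=T(n+1,n)$, admits a strong polynomial dichotomy with respect to the sequence of norms $\{\|\cdot\|_n;\ n\in\mathbb N\}$.
   Context: $\mathbb N=\{1,2,\dots\}$. Strong polynomial dichotomy of $x'=A(t)x$ w.r.t. $\{\|\cdot\|_t\}$: there exist $K>0$, $a\ge\lambda>0$ and projections $P(t)$ with $P(t)T(t,s)=T(t,s)P(s)$ for $t\ge s\ge1$ and, for $t\ge s\ge1$, $x$, $Q(t)=\mathrm{Id}-P(t)$: $\|T(t,s)P(s)x\|_t\le K(t/s)^{-\lambda}\|x\|_s$, $\|T(s,t)Q(t)x\|_s\le K(t/s)^{-\lambda}\|x\|_t$, $\|T(t,s)x\|_t\le K(t/s)^a\|x\|_s$, $\|T(s,t)x\|_s\le K(t/s)^a\|x\|_t$. For a sequence $(A_n)_{n\in\mathbb N}$: $\mathcal A(m,n)=A_{m-1}\cdots A_n$ ($m>n$), $\mathrm{Id}$ ($m=n$), $A_m^{-1}\cdots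 A_{n-1}^{-1}$ ($m<n$). Strong polynomial dichotomy w.r.t. $\{\|\cdot\|_n\}$: there exist $K>0$, $a\ge\lambda>0$ and projections $P_n$ with $A_nP_n=P_{n+1}A_n$ and, for $m\ge n$, $x$: $\|\mathcal A(m,n)P_nx\|_m\le K(m/n)^{-\lambda}\|x\|_n$, $\|\mathcal A(n,m)Q_mx\|_n\le K(m/n)^{-\lambda}\|x\|_m$, $\|\mathcal A(m,n)x\|_m\le K(m/n)^a\|x\|_n$, $\|\mathcal A(n,m)x\|_n\le K(m/n)^a\|x\|_m$. *)

From HB Require Import structures.
From mathcomp Require Import all_boot all_order all_algebra.
From mathcomp Require Import all_classical all_reals all_analysis.
Set Implicit Arguments. Unset Strict Implicit. Unset Printing Implicit Defensive.
Import Order.TTheory GRing.Theory Num.Theory.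
Import numFieldNormedType.Exports.
Local Open Scope classical_set_scope.
Local Open Scope ring_scope.

Section Defs.
Variables (R : realType) (d : nat).
Notation mat := 'M[R]_d.
Notation vec := 'cV[R]_d.

Definition is_norm (N : vec -> R) : Prop :=
  [/\ forall x, 0 <= N x,
      forall x, N x = 0 -> x = 0,
      forall (c : R) x, N (c *: x) = `|c| * N x &
      forall x y, N (x + y) <= N x + N y].

Definition norm_family (N : R -> vec -> R) : Prop :=
  forall t, 1 <= t -> is_norm (N t).

Definition evolution_family (A : R -> mat) (T : R -> R -> mat) : Prop :=
  [/\ forall t, 1 <= t -> T t t = 1%:M,
      forall t s r : R, 1 <= t -> 1 <= s -> 1 <= r -> T t s *m T s r = T t r,
      forall s, 1 <= s -> {within `[1, +oo[, continuous (fun u : R => T u s)} &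
      forall s t : R, 1 <= s -> 1 < t -> is_derive t (1 : R) (fun u : R => T u s) (A t *m T t s)].

Definition is_proj (P : mat) : Prop := P *m P = P.

Definition cont_strong_poly_dichotomy (T : R -> R -> mat) (N : R -> vec -> R) : Prop :=
  exists (K a lam : R) (P : R -> mat),
    [/\ [/\ 0 < K, 0 < lam & lam <= a],
        forall t, 1 <= t -> is_proj (P t),
        forall t s, 1 <= s -> s <= t -> P t *m T t s = T t s *m P s &
        forall t s (x : vec), 1 <= s -> s <= t ->
          [/\ N t (T t s *m (P s *m x)) <= K * (t / s) `^ (- lam) * N s x,
              N s (T s t *m ((1%:M - P t) *m x)) <= K * (t / s) `^ (- lam) * N t x,
              N t (T t s *m x) <= K * (t / s) `^ a * N s x &
              N s (T s t *m x) <= K * (t / s) `^ a * N t x]].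

Fixpoint fwd (As : nat -> mat) (n k : nat) : mat :=
  match k with 0 => 1%:M | k'.+1 => As (n + k')%N *m fwd As n k' end.
Fixpoint bwd (As : nat -> mat) (m k : nat) : mat :=
  match k with 0 => 1%:M | k'.+1 => bwd As m k' *m invmx (As (m + k')%N) end.

Definition cocycle (As : nat -> mat) (m n : nat) : mat :=
  if (n <= m)%N then fwd As n (m - n) else bwd As m (n - m).

Definition disc_strong_poly_dichotomy (As : nat -> mat) (Nn : nat -> vec -> R) : Prop :=
  exists (K a lam : R) (P : nat -> mat),
    [/\ [/\ 0 < K, 0 < lam & lam <= a],
        forall n, (1 <= n)%N -> is_proj (P n),
        forall n, (1 <= n)%N -> As n *m P n = P n.+1 *m As n &
        forall m n (x : vec), (1 <= n)%N -> (n <= m)%N ->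
          [/\ Nn m (cocycle As m n *m (P n *m x))
                <= K * (m%:R / n%:R) `^ (- lam) * Nn n x,
              Nn n (cocycle As n m *m ((1%:M - P m) *m x))
                <= K * (m%:R / n%:R) `^ (- lam) * Nn m x,
              Nn m (cocycle As m n *m x) <= K * (m%:R / n%:R) `^ a * Nn n x &
              Nn n (cocycle As n m *m x) <= K * (m%:R / n%:R) `^ a * Nn m x]].
End Defs.

From HB Require Import structures.
From mathcomp Require Import all_boot all_order all_algebra.
From mathcomp Require Import all_classical all_reals all_analysis.
From mathcomp Require Import zify ring lra.
Import Order.TTheory GRing.Theory Num.Theory Num.Def.
Import numFieldNormedType.Exports.
Local Open Scope classical_set_scope.
Local Open Scope ring_scope.
Set Implicit Arguments. Unset Strict Implicit.

(* The cocycle of A_n = T(n+1,n) is the restriction of T to integer times, so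
   a dichotomy of x' = A(t)x restricts to one of (A_n).  Conversely, discrete
   projections P_n extend to the invariant family
   P(t) = T(t,[t]) P_[t] T([t],t), and because t/[t] <= 2 the bounded growth of
   T moves every discrete estimate to real times at the cost of factors 2^a. *)

Section RealEstimates.
Variable R : realType.

Lemma powRN_le_scale (x y c lam : R) : 0 < x -> 0 < y -> x <= c * y ->
  0 <= lam -> y `^ (- lam) <= c `^ lam * x `^ (- lam).
Proof.
move=> x_gt0 y_gt0 le_xcy lam_ge0.
have c_gt0 : 0 < c by rewrite -(pmulr_lgt0 _ y_gt0); exact: lt_le_trans le_xcy.
have le_pow : x `^ lam <= c `^ lam * y `^ lam.
  have cy_gt0 : 0 < c * y by rewrite mulr_gt0.
  rewrite -powRM ?(ltW c_gt0) ?(ltW y_gt0) //.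
  by apply: (ge0_ler_powR lam_ge0); rewrite ?nnegrE ?(ltW x_gt0) ?(ltW cy_gt0).
rewrite !powRN -div1r ler_pdivrMr ?powR_gt0 // mulrAC ler_pdivlMr ?powR_gt0 //.
by rewrite mul1r.
Qed.

Lemma ler_mul_powR_bound (K K' r b b' f : R) : 0 <= K -> K <= K' -> 1 <= r ->
  b <= b' -> 0 <= f -> K * r `^ b * f <= K' * r `^ b' * f.
Proof.
move=> K_ge0 le_KK' r_ge1 le_bb' f_ge0; rewrite ler_wpM2r //.
by apply: ler_pM => //; [exact: powR_ge0 | exact: ler_powR].
Qed.

Lemma le_mul3_chain (a b e f c1 c2 c3 : R) : 0 <= c1 -> 0 <= c2 ->
  a <= c1 * b -> b <= c2 * e -> e <= c3 * f -> a <= c1 * c2 * c3 * f.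
Proof.
move=> c1_ge0 c2_ge0 le_ab le_be le_ef; rewrite -!mulrA.
apply: (le_trans le_ab); rewrite ler_wpM2l //.
by apply: (le_trans le_be); rewrite ler_wpM2l.
Qed.

Lemma natr_truncn_ge1 (t : R) : 1 <= t -> 1 <= (trunc t)%:R :> R.
Proof. by rewrite ler1n truncn_gt0. Qed.

Lemma natr_truncn_le (t : R) : 1 <= t -> (trunc t)%:R <= t.
Proof. by move=> t_ge1; rewrite truncn_le (le_trans ler01 t_ge1). Qed.

Lemma le_2truncn (t : R) : 1 <= t -> t <= 2 * (trunc t)%:R.
Proof.
move=> t_ge1; have /andP[_] := truncn_itv (le_trans ler01 t_ge1).
by rewrite -natr1; have := natr_truncn_ge1 t_ge1; lra.
Qed.

Lemma truncn_ratio_powRN_le (s t lam : R) : 0 <= lam -> 1 <= s -> s <= t ->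
  ((trunc t)%:R / (trunc s)%:R) `^ (- lam) <= 2 `^ lam * (t / s) `^ (- lam).
Proof.
move=> lam_ge0 s_ge1 le_st; have t_ge1 := le_trans s_ge1 le_st.
have n_ge1 := natr_truncn_ge1 s_ge1; have m_ge1 := natr_truncn_ge1 t_ge1.
have t_le := le_2truncn t_ge1; have n_le := natr_truncn_le s_ge1.
apply: powRN_le_scale => //; rewrite ?divr_gt0 ?(lt_le_trans ltr01) //.
rewrite mulrA ler_pdivrMr ?(lt_le_trans ltr01) // mulrAC.
rewrite ler_pdivlMr ?(lt_le_trans ltr01) //; nra.
Qed.

End RealEstimates.

Section SampledEvolution.
Variables (R : realType) (d : nat) (T : R -> R -> 'M[R]_d).
Hypothesis T_id : forall t, 1 <= t -> T t t = 1%:M.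
Hypothesis T_comp : forall t s r, 1 <= t -> 1 <= s -> 1 <= r ->
  T t s *m T s r = T t r.

Local Notation Tn := (fun n : nat => T n.+1%:R n%:R).

Lemma fwd_sampled n k : (0 < n)%N -> fwd Tn n k = T (n + k)%:R n%:R.
Proof.
move=> n_gt0; elim: k => [|k IH] /=; first by rewrite addn0 T_id // ler1n.
by rewrite IH T_comp ?addnS // ler1n; lia.
Qed.

Lemma invmx_sampled n : (0 < n)%N -> invmx (Tn n) = T n%:R n.+1%:R.
Proof.
move=> n_gt0; have TTn : Tn n *m T n%:R n.+1%:R = 1%:M.
  by rewrite T_comp ?T_id // ler1n; lia.
have [Tn_unit _] := mulmx1_unit TTn.
by rewrite -[invmx _]mulmx1 -TTn mulKmx.
Qed.

Lemma bwd_sampled m k : (0 < m)%N -> bwd Tn m k = T m%:R (m + k)%:R.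
Proof.
move=> m_gt0; elim: k => [|k IH] /=; first by rewrite addn0 T_id // ler1n.
by rewrite IH invmx_sampled ?T_comp ?addnS // ?ler1n; lia.
Qed.

Lemma cocycle_sampled m n : (0 < m)%N -> (0 < n)%N ->
  cocycle Tn m n = T m%:R n%:R.
Proof.
move=> m_gt0 n_gt0; rewrite /cocycle; case: leqP => [le_nm|lt_mn].
  by rewrite fwd_sampled // subnKC.
by rewrite bwd_sampled // subnKC // ltnW.
Qed.

Lemma cont_to_disc_dichotomy (N : R -> 'cV[R]_d -> R) :
  cont_strong_poly_dichotomy T N ->
  disc_strong_poly_dichotomy Tn (fun n : nat => N n%:R).
Proof.
case=> K [a [lam [P [K_lam P_proj P_comm bounds]]]].
exists K, a, lam, (fun n : nat => P n%:R); split => //.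
- by move=> n n_gt0; apply: P_proj; rewrite ler1n.
- by move=> n n_gt0 /=; rewrite P_comm ?ler1n ?ler_nat.
- move=> m n x n_gt0 le_nm.
  rewrite !cocycle_sampled ?(leq_trans n_gt0 le_nm) //.
  by apply: bounds; rewrite ?ler1n ?ler_nat.
Qed.

Definition bounded_growth (N : R -> 'cV[R]_d -> R) (K a : R) :=
  forall t s x, 1 <= s -> s <= t ->
    N t (T t s *m x) <= K * (t / s) `^ a * N s x /\
    N s (T s t *m x) <= K * (t / s) `^ a * N t x.

Section FloorProjection.
Variables (P : nat -> 'M[R]_d) (N : R -> 'cV[R]_d -> R) (K0 a0 K lam : R).
Hypothesis P_proj : forall n, (0 < n)%N -> is_proj (P n).
Hypothesis P_comm : forall n, (0 < n)%N -> Tn n *m P n = P n.+1 *m Tn n.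
Hypothesis N_ge0 : forall t x, 1 <= t -> 0 <= N t x.
Hypotheses (K0_gt0 : 0 < K0) (a0_gt0 : 0 < a0) (K_gt0 : 0 < K) (lam_gt0 : 0 < lam).
Hypothesis growth : bounded_growth N K0 a0.
Hypothesis disc_stable : forall m n x, (0 < n)%N -> (n <= m)%N ->
  N m%:R (T m%:R n%:R *m (P n *m x)) <= K * (m%:R / n%:R) `^ (- lam) * N n%:R x.
Hypothesis disc_unstable : forall m n x, (0 < n)%N -> (n <= m)%N ->
  N n%:R (T n%:R m%:R *m ((1%:M - P m) *m x))
    <= K * (m%:R / n%:R) `^ (- lam) * N m%:R x.

Local Notation Kfloor := (K0 * 2 `^ a0 * (K * 2 `^ lam) * (K0 * 2 `^ a0)).

Lemma sampled_proj_comm m n : (0 < n)%N -> (n <= m)%N ->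
  P m *m T m%:R n%:R = T m%:R n%:R *m P n.
Proof.
move=> n_gt0 /subnKC <-; elim: (m - n)%N => [|k IH].
  by rewrite addn0 T_id ?ler1n // mulmx1 mul1mx.
have nk_gt0 : (0 < n + k)%N by rewrite addn_gt0 n_gt0.
rewrite addnS -(T_comp (s := (n + k)%:R)) ?ler1n //.
by rewrite mulmxA -P_comm // -mulmxA IH mulmxA.
Qed.

Definition floor_proj t := T t (trunc t)%:R *m P (trunc t) *m T (trunc t)%:R t.

Lemma floor_proj_idem t : 1 <= t -> is_proj (floor_proj t).
Proof.
move=> t_ge1; have m_ge1 := natr_truncn_ge1 t_ge1.
have PP : P (trunc t) *m P (trunc t) = P (trunc t).
  by apply: P_proj; rewrite truncn_gt0.
rewrite /is_proj /floor_proj -!mulmxA (mulmxA (T _ t)) T_comp ?T_id // mul1mx.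
by rewrite (mulmxA (P _)) PP mulmxA.
Qed.

Lemma floor_proj_comm t s : 1 <= s -> s <= t ->
  floor_proj t *m T t s = T t s *m floor_proj s.
Proof.
move=> s_ge1 le_st; have t_ge1 := le_trans s_ge1 le_st.
have m_ge1 := natr_truncn_ge1 t_ge1; have n_ge1 := natr_truncn_ge1 s_ge1.
have n_gt0 : (0 < trunc s)%N by rewrite truncn_gt0.
rewrite /floor_proj; set m := trunc t; set n := trunc s.
transitivity (T t m%:R *m (P m *m T m%:R n%:R) *m T n%:R s).
  by rewrite -(mulmxA _ (T m%:R t)) T_comp // -(T_comp (s := n%:R) (r := s)) // !mulmxA.
by rewrite sampled_proj_comm ?le_truncn // !mulmxA T_comp // T_comp.
Qed.

Lemma growth_to_floor t x : 1 <= t ->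
  N t (T t (trunc t)%:R *m x) <= K0 * 2 `^ a0 * N (trunc t)%:R x /\
  N (trunc t)%:R (T (trunc t)%:R t *m x) <= K0 * 2 `^ a0 * N t x.
Proof.
move=> t_ge1; have m_ge1 := natr_truncn_ge1 t_ge1.
have m_le := natr_truncn_le t_ge1; have le_m := le_2truncn t_ge1.
have [fwd_bd bwd_bd] := growth x m_ge1 m_le.
have le_pow : K0 * (t / (trunc t)%:R) `^ a0 <= K0 * 2 `^ a0.
  have m_gt0 : 0 < (trunc t)%:R :> R := lt_le_trans ltr01 m_ge1.
  rewrite ler_wpM2l ?(ltW K0_gt0) //; apply: (ge0_ler_powR (ltW a0_gt0)).
  - by rewrite nnegrE divr_ge0 ?(ltW m_gt0) ?(le_trans ler01 t_ge1).
  - by rewrite nnegrE.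
  - by rewrite ler_pdivrMr.
by split; [apply: le_trans fwd_bd _ | apply: le_trans bwd_bd _];
  rewrite ler_wpM2r ?N_ge0.
Qed.

Lemma floor_chain t s a b e f : 1 <= s -> s <= t -> 0 <= e ->
  a <= K0 * 2 `^ a0 * b ->
  b <= K * ((trunc t)%:R / (trunc s)%:R) `^ (- lam) * e ->
  e <= K0 * 2 `^ a0 * f ->
  a <= Kfloor * (t / s) `^ (- lam) * f.
Proof.
move=> s_ge1 le_st e_ge0 le_ab le_be le_ef.
have le_be' : b <= K * (2 `^ lam * (t / s) `^ (- lam)) * e.
  apply: le_trans le_be _; rewrite ler_wpM2r // ler_wpM2l ?(ltW K_gt0) //.
  exact: truncn_ratio_powRN_le (ltW lam_gt0) s_ge1 le_st.
suff -> : Kfloor * (t / s) `^ (- lam) =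
    K0 * 2 `^ a0 * (K * (2 `^ lam * (t / s) `^ (- lam))) * (K0 * 2 `^ a0).
  apply: le_mul3_chain le_ab le_be' le_ef.
    by rewrite mulr_ge0 ?powR_ge0 ?(ltW K0_gt0).
  by rewrite !mulr_ge0 ?powR_ge0 ?(ltW K_gt0).
by ring.
Qed.

Lemma floor_proj_stable t s x : 1 <= s -> s <= t ->
  N t (T t s *m (floor_proj s *m x)) <= Kfloor * (t / s) `^ (- lam) * N s x.
Proof.
move=> s_ge1 le_st; have t_ge1 := le_trans s_ge1 le_st.
have m_ge1 := natr_truncn_ge1 t_ge1; have n_ge1 := natr_truncn_ge1 s_ge1.
have n_gt0 : (0 < trunc s)%N by rewrite truncn_gt0.
have -> : T t s *m (floor_proj s *m x) = T t (trunc t)%:R *m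
    (T (trunc t)%:R (trunc s)%:R *m (P (trunc s) *m (T (trunc s)%:R s *m x))).
  by rewrite /floor_proj !mulmxA T_comp // T_comp.
apply: floor_chain s_ge1 le_st (N_ge0 _ n_ge1) (growth_to_floor _ t_ge1).1
  (disc_stable _ n_gt0 (le_truncn le_st)) (growth_to_floor _ s_ge1).2.
Qed.

Lemma floor_proj_unstable t s x : 1 <= s -> s <= t ->
  N s (T s t *m ((1%:M - floor_proj t) *m x)) <= Kfloor * (t / s) `^ (- lam) * N t x.
Proof.
move=> s_ge1 le_st; have t_ge1 := le_trans s_ge1 le_st.
have m_ge1 := natr_truncn_ge1 t_ge1; have n_ge1 := natr_truncn_ge1 s_ge1.
have n_gt0 : (0 < trunc s)%N by rewrite truncn_gt0.
have compl : 1%:M - floor_proj t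
    = T t (trunc t)%:R *m (1%:M - P (trunc t)) *m T (trunc t)%:R t.
  by rewrite mulmxBr mulmxBl mulmx1 T_comp // T_id.
have -> : T s t *m ((1%:M - floor_proj t) *m x) = T s (trunc s)%:R *m
    (T (trunc s)%:R (trunc t)%:R *m ((1%:M - P (trunc t)) *m (T (trunc t)%:R t *m x))).
  by rewrite compl !mulmxA T_comp // T_comp.
apply: floor_chain s_ge1 le_st (N_ge0 _ m_ge1) (growth_to_floor _ s_ge1).1
  (disc_unstable _ n_gt0 (le_truncn le_st)) (growth_to_floor _ t_ge1).2.
Qed.

Lemma floor_proj_dichotomy : cont_strong_poly_dichotomy T N.
Proof.
have Kfloor_ge0 : 0 <= Kfloor by rewrite !mulr_ge0 ?powR_ge0 ?(ltW K0_gt0) ?(ltW K_gt0).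
exists (Num.max K0 Kfloor), (Num.max a0 lam), lam, floor_proj; split.
- by rewrite lt_max K0_gt0 le_max lexx orbT.
- exact: floor_proj_idem.
- exact: floor_proj_comm.
move=> t s x s_ge1 le_st; have t_ge1 := le_trans s_ge1 le_st.
have ts_ge1 : 1 <= t / s by rewrite ler_pdivlMr ?mul1r // (lt_le_trans ltr01).
have [fwd_bd bwd_bd] := growth x s_ge1 le_st.
split.
- apply: le_trans (floor_proj_stable x s_ge1 le_st) _.
  by apply: ler_mul_powR_bound; rewrite ?le_max ?lexx ?orbT ?N_ge0.
- apply: le_trans (floor_proj_unstable x s_ge1 le_st) _.
  by apply: ler_mul_powR_bound; rewrite ?le_max ?lexx ?orbT ?N_ge0.
- apply: le_trans fwd_bd _.
  by apply: ler_mul_powR_bound; rewrite ?(ltW K0_gt0) ?le_max ?lexx ?N_ge0.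
- apply: le_trans bwd_bd _.
  by apply: ler_mul_powR_bound; rewrite ?(ltW K0_gt0) ?le_max ?lexx ?N_ge0.
Qed.

End FloorProjection.

Lemma disc_to_cont_dichotomy (N : R -> 'cV[R]_d -> R) (K0 a0 : R) :
  (forall t x, 1 <= t -> 0 <= N t x) -> 0 < K0 -> 0 < a0 ->
  bounded_growth N K0 a0 ->
  disc_strong_poly_dichotomy Tn (fun n : nat => N n%:R) ->
  cont_strong_poly_dichotomy T N.
Proof.
move=> N_ge0 K0_gt0 a0_gt0 growth.
case=> K [a [lam [P [[K_gt0 lam_gt0 _] P_proj P_comm bounds]]]].
apply: (floor_proj_dichotomy P_proj P_comm N_ge0 K0_gt0 a0_gt0 K_gt0 lam_gt0 growth).
- move=> m n x n_gt0 le_nm; have [+ _ _ _] := bounds m n x n_gt0 le_nm.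
  by rewrite !cocycle_sampled ?(leq_trans n_gt0 le_nm).
- move=> m n x n_gt0 le_nm; have [_ + _ _] := bounds m n x n_gt0 le_nm.
  by rewrite !cocycle_sampled ?(leq_trans n_gt0 le_nm).
Qed.

End SampledEvolution.

Theorem proposition5p2 (R : realType) (d : nat)
  (A : R -> 'M[R]_d) (T : R -> R -> 'M[R]_d) (N : R -> 'cV[R]_d -> R) :
  {within `[1, +oo[, continuous A} ->
  evolution_family A T ->
  norm_family N ->
  (exists K a : R, [/\ 0 < K, 0 < a &
     forall t s (x : 'cV[R]_d), 1 <= s -> s <= t ->
       N t (T t s *m x) <= K * (t / s) `^ a * N s x /\
       N s (T s t *m x) <= K * (t / s) `^ a * N t x]) ->
  (cont_strong_poly_dichotomy T N <->
   disc_strong_poly_dichotomy (fun n : nat => T n.+1%:R n%:R)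
                              (fun n : nat => N n%:R)).
Proof.
move=> _ [T_id T_comp _ _] N_norm [K0 [a0 [K0_gt0 a0_gt0 growth]]].
have N_ge0 t x : 1 <= t -> 0 <= N t x by move=> /N_norm[].
split; first exact: cont_to_disc_dichotomy.
exact: disc_to_cont_dichotomy N_ge0 K0_gt0 a0_gt0 growth.
Qed.
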